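(* Let $G$ be a unit square graph and let $u,v\in V(G)$ be distinct non-adjacent vertices. Then $G[N(u)\cap N(v)]$ is a unit interval graph, and $N(u)\cap N(v)$ contains no independent set of size three.
   Context: A unit square graph is a graph $G$ admitting $f\colon V(G)\to\mathbb{R}^2$ with $vw\in E(G)$ iff $\|f(v)-f(w)\|_\infty\le1$ for distinct $v,w$. A unit interval graph is an intersection graph of unit-length intervals on the real line. *)

From Stdlib Require Import Reals FinFun.
Open Scope R_scope.

Definition simple_graph (V : Type) (adj : V -> V -> Prop) : Prop :=
  Finite V /\ (forall v w, adj v w -> adj w v) /\ (forall v, ~ adj v v).

Definition dist_inf (p q : R * R) : R :=
  Rmax (Rabs (fst p - fst q)) (Rabs (snd p - snd q)).

Definition unit_square_graph (V : Type) (adj : V -> V -> Prop) : Prop :=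
  exists f : V -> R * R,
    forall v w, v <> w -> (adj v w <-> dist_inf (f v) (f w) <= 1).

Definition nbhd (V : Type) (adj : V -> V -> Prop) (u : V) : V -> Prop :=
  fun x => adj u x.

Definition unit_intervals_meet (a b : R) : Prop :=
  exists x, a <= x <= a + 1 /\ b <= x <= b + 1.

(* The induced subgraph G[S] is a unit interval graph: intersection graph of
   unit-length (closed) intervals, one interval [g v, g v + 1] per vertex of S. *)
Definition induced_unit_interval (V : Type) (adj : V -> V -> Prop) (S : V -> Prop) : Prop :=
  exists g : V -> R,
    forall v w, S v -> S w -> v <> w -> (adj v w <-> unit_intervals_meet (g v) (g w)).

Definition has_indep3 (V : Type) (adj : V -> V -> Prop) (S : V -> Prop) : Prop :=
  exists a b c, S a /\ S b /\ S c /\ a <> b /\ a <> c /\ b <> c /\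
    ~ adj a b /\ ~ adj a c /\ ~ adj b c.

From Stdlib Require Import Reals FinFun Lra.
Open Scope R_scope.

(* Since u and v are not adjacent, their images are more than 1 apart in one
   coordinate, say the first.  Every common neighbour is within 1 of both in
   that coordinate, so all common neighbours have first coordinates in an
   interval of length less than 1; among them adjacency is therefore decided
   by the second coordinate alone, which gives the unit interval model.  Three
   pairwise non-adjacent common neighbours would have second coordinates
   pairwise more than 1 apart, yet all within 1 of that of u: impossible. *)

Lemma Rabs_le_iff (x c : R) : Rabs x <= c <-> - c <= x <= c.
Proof.
  split; [|apply Rabs_le].
  intros Hx; pose proof (Rle_abs x); pose proof (Rle_abs (- x)).
  rewrite Rabs_Ropp in *; lra.
Qed.

Lemma Rmax_le_iff (x y c : R) : Rmax x y <= c <-> x <= c /\ y <= c.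
Proof.
  split.
  - intros H; pose proof (Rmax_l x y); pose proof (Rmax_r x y); lra.
  - intros [Hx Hy]; apply Rmax_lub; assumption.
Qed.

Lemma unit_intervals_meet_iff (a b : R) :
  unit_intervals_meet a b <-> Rabs (a - b) <= 1.
Proof.
  rewrite Rabs_le_iff; split.
  - intros [x Hx]; lra.
  - intros Hab; exists (Rmax a b); unfold Rmax; destruct (Rle_dec a b); lra.
Qed.

Lemma close_to_two_far_points (r p q x y : R) :
  r < Rabs (p - q) ->
  Rabs (p - x) <= r -> Rabs (q - x) <= r ->
  Rabs (p - y) <= r -> Rabs (q - y) <= r ->
  Rabs (x - y) < r.
Proof.
  rewrite !Rabs_le_iff; intros Hpq Hpx Hqx Hpy Hqy.
  destruct (Rle_dec p q).
  - rewrite Rabs_left1 in Hpq by lra; apply Rabs_def1; lra.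
  - rewrite Rabs_right in Hpq by lra; apply Rabs_def1; lra.
Qed.

Lemma no_three_spread_near_point (r c x y z : R) :
  Rabs (c - x) <= r -> Rabs (c - y) <= r -> Rabs (c - z) <= r ->
  r < Rabs (x - y) -> r < Rabs (x - z) -> r < Rabs (y - z) -> False.
Proof.
  rewrite !Rabs_le_iff; intros Hx Hy Hz.
  unfold Rabs; repeat destruct Rcase_abs; lra.
Qed.

Section CommonNeighbourhood.

Variables (V : Type) (adj : V -> V -> Prop) (a b : V -> R).
Hypothesis adj_irrefl : forall w, ~ adj w w.
Hypothesis adj_box : forall w z, w <> z ->
  (adj w z <-> Rabs (a w - a z) <= 1 /\ Rabs (b w - b z) <= 1).

Lemma adj_close w z : adj w z -> Rabs (a w - a z) <= 1 /\ Rabs (b w - b z) <= 1.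
Proof.
  intros Hwz; apply adj_box; [|exact Hwz].
  intros <-; exact (adj_irrefl w Hwz).
Qed.

Variables (u v : V).
Hypothesis far_a : 1 < Rabs (a u - a v).

Lemma common_nbhd_adj_iff w z :
  adj u w -> adj v w -> adj u z -> adj v z -> w <> z ->
  (adj w z <-> Rabs (b w - b z) <= 1).
Proof.
  intros Huw Hvw Huz Hvz Hwz; rewrite adj_box by exact Hwz.
  pose proof (adj_close _ _ Huw); pose proof (adj_close _ _ Hvw).
  pose proof (adj_close _ _ Huz); pose proof (adj_close _ _ Hvz).
  assert (Hclose : Rabs (a w - a z) < 1)
    by (apply (close_to_two_far_points 1 (a u) (a v)); tauto).
  split; [tauto | intros; split; lra].
Qed.

Lemma common_nbhd_unit_interval :
  induced_unit_interval V adj (fun x => nbhd V adj u x /\ nbhd V adj v x).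
Proof.
  exists b; intros w z [Huw Hvw] [Huz Hvz] Hwz.
  rewrite unit_intervals_meet_iff; apply common_nbhd_adj_iff; assumption.
Qed.

Lemma common_nbhd_no_indep3 :
  ~ has_indep3 V adj (fun x => nbhd V adj u x /\ nbhd V adj v x).
Proof.
  intros (x & y & z & [Hux Hvx] & [Huy Hvy] & [Huz Hvz]
          & Hxy & Hxz & Hyz & Nxy & Nxz & Nyz).
  unfold nbhd in *.
  rewrite common_nbhd_adj_iff in Nxy, Nxz, Nyz by assumption.
  apply (no_three_spread_near_point 1 (b u) (b x) (b y) (b z));
    (apply adj_close; assumption) || lra.
Qed.

Lemma common_nbhd_structure :
  induced_unit_interval V adj (fun x => nbhd V adj u x /\ nbhd V adj v x) /\
  ~ has_indep3 V adj (fun x => nbhd V adj u x /\ nbhd V adj v x).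
Proof. exact (conj common_nbhd_unit_interval common_nbhd_no_indep3). Qed.

End CommonNeighbourhood.

Theorem mainTheorem6 (V : Type) (adj : V -> V -> Prop)
  (HG : simple_graph V adj) (Hus : unit_square_graph V adj)
  (u v : V) (Huv : u <> v) (Hna : ~ adj u v) :
  induced_unit_interval V adj (fun x => nbhd V adj u x /\ nbhd V adj v x) /\
  ~ has_indep3 V adj (fun x => nbhd V adj u x /\ nbhd V adj v x).
Proof.
  destruct HG as (_ & _ & adj_irrefl); destruct Hus as [f Hf].
  pose (a := fun x => fst (f x)); pose (b := fun x => snd (f x)).
  assert (box_ab : forall w z, w <> z ->
      (adj w z <-> Rabs (a w - a z) <= 1 /\ Rabs (b w - b z) <= 1)).
  { intros w z Hwz; rewrite Hf by exact Hwz; unfold dist_inf.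
    apply Rmax_le_iff. }
  assert (box_ba : forall w z, w <> z ->
      (adj w z <-> Rabs (b w - b z) <= 1 /\ Rabs (a w - a z) <= 1)).
  { intros w z Hwz; rewrite box_ab by exact Hwz; tauto. }
  rewrite box_ab in Hna by exact Huv.
  destruct (Rle_dec (Rabs (a u - a v)) 1) as [Hle | Hgt].
  - apply (common_nbhd_structure V adj b a adj_irrefl box_ba); lra.
  - apply (common_nbhd_structure V adj a b adj_irrefl box_ab); lra.
Qed.
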